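(* Let $\Gamma$ be a graph with discriminant $P$ and let $x,y$ be vertices of $\Gamma$. If perfect state transfer occurs from $d^*e_x$ to $d^*e_y$ at time $\tau$, then $2\lambda$ is an algebraic integer for every $\lambda\in\Theta_P(e_x)$.
   Context: All graphs are finite and simple. For $\Gamma$ with symmetric arc set $\mathcal{A}$ ($t((x,y))=y$, $(x,y)^{-1}=(y,x)$): boundary matrix $d_{x,a}=\frac{1}{\sqrt{\deg x}}\delta_{x,t(a)}$, shift matrix $R_{a,b}=\delta_{a,b^{-1}}$, $U=R(2d^*d-I_{\mathcal{A}})$, discriminant $P=dRd^*$. Perfect state transfer from $\Phi$ to a distinct state $\Psi$ at time $\tau\in\mathbb{Z}_{\ge1}$ means $U^\tau\Phi=\gamma\Psi$ for some $|\gamma|=1$. For the spectral decomposition $P=\sum_\lambda\lambda E_\lambda$ (orthogonal eigenprojections), $\Theta_P(e_x)=\{\lambda\mid E_\lambda e_x\ne0\}$. *)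

From HB Require Import structures.
From mathcomp Require Import all_boot all_order all_algebra all_field.
From mathcomp Require Import algC algnum.
Set Implicit Arguments. Unset Strict Implicit. Unset Printing Implicit Defensive.
Import Order.TTheory GRing.Theory Num.Theory.
Local Open Scope ring_scope.

Definition simple_graph (V : finType) (e : rel V) : Prop :=
  symmetric e /\ irreflexive e.

Definition arc (V : finType) (e : rel V) : finType := {a : V * V | e a.1 a.2}.

Definition tail_arc (V : finType) (e : rel V) (a : arc e) : V := (val a).1.
Definition term_arc (V : finType) (e : rel V) (a : arc e) : V := (val a).2.

(* inverse arc (x,y)^{-1} = (y,x), needs symmetry *)
Definition arc_inv_pair (V : finType) (a : V * V) : V * V := (a.2, a.1).

Definition deg (V : finType) (e : rel V) (x : V) : nat := #|[set y | e x y]|.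

Definition adjmx (m n : nat) (A : 'M[algC]_(m, n)) : 'M[algC]_(n, m) :=
  map_mx (fun z : algC => z^*) A^T.

Definition bdry (V : finType) (e : rel V) : 'M[algC]_(#|V|, #|arc e|) :=
  \matrix_(i, j)
    (if enum_val i == term_arc (enum_val j : arc e)
     then (sqrtC ((deg e (enum_val i))%:R))^-1 else 0).

Definition shift (V : finType) (e : rel V) : 'M[algC]_(#|arc e|) :=
  \matrix_(i, j)
    ((val (enum_val i : arc e) == arc_inv_pair (val (enum_val j : arc e)))%:R).

Definition evol (V : finType) (e : rel V) : 'M[algC]_(#|arc e|) :=
  shift e *m (2%:R *: (adjmx (bdry e) *m bdry e) - 1%:M).

Definition discr (V : finType) (e : rel V) : 'M[algC]_(#|V|) :=
  bdry e *m shift e *m adjmx (bdry e).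

Definition evec (V : finType) (x : V) : 'cV[algC]_(#|V|) :=
  delta_mx (enum_rank x) 0.

Definition pst (n : nat) (U : 'M[algC]_n) (Phi Psi : 'cV[algC]_n) (tau : nat) : Prop :=
  Phi != Psi /\ (0 < tau)%N /\
  exists gamma : algC, `|gamma| = 1 /\ U ^+ tau *m Phi = gamma *: Psi.

Definition spectral_decomp (n : nat) (P : 'M[algC]_n) (s : seq algC)
  (E : algC -> 'M[algC]_n) : Prop :=
  [/\ uniq s,
      (forall lam, lam \in s ->
         [/\ E lam != 0, E lam *m E lam = E lam & adjmx (E lam) = E lam]),
      (forall lam mu, lam \in s -> mu \in s -> lam != mu -> E lam *m E mu = 0),
      \sum_(lam <- s) E lam = 1%:M
    & P = \sum_(lam <- s) lam *: E lam].

Definition eig_support (n : nat) (s : seq algC) (E : algC -> 'M[algC]_n)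
  (v : 'cV[algC]_n) : seq algC :=
  [seq lam <- s | E lam *m v != 0].

From Pilot Require Import Defs.
From HB Require Import structures.
From mathcomp Require Import all_boot all_order all_algebra all_field.
From mathcomp Require Import algC algnum ring.
Import Order.TTheory GRing.Theory Num.Theory.
Local Open Scope ring_scope.

(* Let E be the eigenprojection of P = d R d^* for lam.  Since R^2 = 1 and d^* d d^* = d^*,
   the matrices w_t := lam E d U^t d^* satisfy w_(t+2) = 2 lam w_(t+1) - w_t, hence
   2 w_t = D_t(2 lam) lam E for the Lucas polynomials D_0 = 2, D_1 = X,
   D_(t+2) = X D_(t+1) - D_t (so that D_t(2 cos a) = 2 cos (t a)).  The factor lam is
   needed because d d^* vanishes at isolated vertices.  Multiplying U^tau d^* e_x =
   gamma d^* e_y on the left by lam E d and by lam E d R and eliminating gamma E e_y gives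
   lam (lam D_tau(2 lam) - D_(tau-1)(2 lam)) E e_x = 0; so when E e_x <> 0, the number
   2 lam is a root of the monic integer polynomial X (D_(tau+1) - D_(tau-1)). *)

Section LucasPoly.
Context {R : comNzRingType}.

Fixpoint lucas_poly (t : nat) : {poly R} :=
  match t with
  | 0 => 2%:R
  | 1 => 'X
  | (t'.+1 as t1).+1 => 'X * lucas_poly t1 - lucas_poly t'
  end.

Lemma lucas_polySS t : lucas_poly t.+2 = 'X * lucas_poly t.+1 - lucas_poly t.
Proof. by []. Qed.

Lemma lucas_poly_monic t :
  lucas_poly t.+1 \is monic /\ size (lucas_poly t.+1) = t.+2.
Proof.
suff [] : [/\ lucas_poly t.+1 \is monic, size (lucas_poly t.+1) = t.+2
             & (size (lucas_poly t) <= t.+1)%N] by [].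
elim: t => [|t [mon sz szt]].
  by rewrite /= monicX size_polyX -polyC_natr size_polyC leq_b1.
have szX : size ('X * lucas_poly t.+1) = t.+3.
  by rewrite size_monicM ?monicX ?monic_neq0 // size_polyX sz.
have lt : (size (- lucas_poly t) < size ('X * lucas_poly t.+1)%R)%N.
  by rewrite size_polyN szX ltnS (leq_trans szt).
rewrite lucas_polySS monicE lead_coefDl // size_polyDl //.
by rewrite lead_coef_Mmonic // lead_coefX eqxx szX sz.
Qed.

Lemma size_lucas_poly t : (size (lucas_poly t) <= t.+1)%N.
Proof.
case: t => [|t]; last by have [_ ->] := lucas_poly_monic t.
by rewrite /= -polyC_natr size_polyC leq_b1.
Qed.

Definition pst_poly t : {poly R} := 'X * (lucas_poly t.+2 - lucas_poly t).

Lemma pst_poly_monic t : pst_poly t \is monic.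
Proof.
have [mon sz] := lucas_poly_monic t.+1.
rewrite monicMl ?monicX // monicE lead_coefDl; first by rewrite -monicE.
by rewrite size_polyN sz ltnS (leq_trans (size_lucas_poly t)).
Qed.

Lemma lucas_polyOver (S : subringClosed R) t : lucas_poly t \is a polyOver S.
Proof.
suff [] : lucas_poly t \is a polyOver S /\ lucas_poly t.+1 \is a polyOver S by [].
elim: t => [|t [St St1]]; first by rewrite rpred_nat polyOverX.
by split=> //; rewrite lucas_polySS rpredB ?rpredM ?polyOverX.
Qed.

Lemma pst_polyOver (S : subringClosed R) t : pst_poly t \is a polyOver S.
Proof. by apply: rpredM; [exact: polyOverX | apply: rpredB; exact: lucas_polyOver]. Qed.

Lemma lucas_recurrence (V : lmodType R) (y : R) (v : V) (w : nat -> V) :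
  w 0 = 2%:R *: v -> w 1 = y *: v -> (forall t, w t.+2 = y *: w t.+1 - w t) ->
  forall t, w t = (lucas_poly t).[y] *: v.
Proof.
move=> w0 w1 wSS t.
suff [] : w t = (lucas_poly t).[y] *: v /\ w t.+1 = (lucas_poly t.+1).[y] *: v by [].
elim: t => [|t [wt wt1]]; first by rewrite w0 w1 /= -polyC_natr hornerC hornerX.
split=> //; rewrite wSS wt wt1 lucas_polySS.
by rewrite hornerD hornerN hornerM hornerX scalerDl scaleNr scalerA.
Qed.
End LucasPoly.

Section WalkOnEigenspace.
Context {R : comNzRingType} {n m : nat}.
Context {d : 'M[R]_(n, m)} {ds : 'M[R]_(m, n)} {S : 'M[R]_m} {U : 'M[R]_m}.
Hypotheses (S_invol : S *m S = 1%:M) (ds_d_ds : ds *m d *m ds = ds).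
Hypothesis U_def : U = S *m (2%:R *: (ds *m d) - 1%:M).

Context {k : nat} {E : 'M[R]_(k, n)} {lam : R}.
Hypothesis E_eigen : E *m (d *m S *m ds) = lam *: E.

Local Notation F := (lam *: E).

Let eigen_dSds : F *m d *m S *m ds = lam *: F.
Proof. by rewrite -!scalemxAl -E_eigen !mulmxA. Qed.

Let walk_exprS j : U ^+ j.+1 = U *m U ^+ j := exprS U j.

Lemma eigen_d_ds : F *m d *m ds = F.
Proof. by rewrite -E_eigen -!mulmxA (mulmxA ds) ds_d_ds. Qed.

Lemma eigen_d_walk : F *m d *m U = (2%:R * lam) *: (F *m d) - F *m d *m S.
Proof.
rewrite U_def !mulmxA mulmxBr mulmx1 -scalemxAr !mulmxA eigen_dSds.
by rewrite -[lam *: F *m d]scalemxAl scalerA.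
Qed.

Lemma eigen_d_S_walk : F *m d *m S *m U = F *m d.
Proof.
rewrite U_def -mulmxA (mulmxA S) S_invol mul1mx mulmxBr mulmx1.
by rewrite -scalemxAr mulmxA eigen_d_ds scaler_nat mulr2n addrK.
Qed.

Lemma eigen_walk_rec t :
  F *m d *m U ^+ t.+2 *m ds =
  (2%:R * lam) *: (F *m d *m U ^+ t.+1 *m ds) - F *m d *m U ^+ t *m ds.
Proof.
rewrite walk_exprS (mulmxA (F *m d)) eigen_d_walk !mulmxBl.
rewrite -!(scalemxAl (2%:R * lam)); congr (_ - _).
by rewrite walk_exprS (mulmxA (F *m d *m S)) eigen_d_S_walk.
Qed.

Lemma eigen_walk_lucas t :
  2%:R *: (F *m d *m U ^+ t *m ds) = (lucas_poly t).[2%:R * lam] *: F.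
Proof.
apply: (@lucas_recurrence _ _ _ _ (fun t => 2%:R *: (F *m d *m U ^+ t *m ds)))
  => [|| {}t] /=.
- by rewrite expr0 mulmx1 eigen_d_ds.
- rewrite expr1 eigen_d_walk mulmxBl eigen_dSds -[_ *: (F *m d) *m ds]scalemxAl.
  rewrite eigen_d_ds -scalerBl scalerA.
  by congr (_ *: _); ring.
- by rewrite eigen_walk_rec scalerBr !scalerA (mulrC 2%:R).
Qed.

Lemma eigen_pst_root {t} {u v : 'cV[R]_n} {gamma : R} :
  U ^+ t.+1 *m (ds *m u) = gamma *: (ds *m v) ->
  (pst_poly t).[2%:R * lam] *: (E *m u) = 0.
Proof.
move=> transfer.
have lucas_u j :
    2%:R *: (F *m d *m U ^+ j *m ds *m u) = (lucas_poly j).[2%:R * lam] *: (F *m u).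
  by rewrite scalemxAl eigen_walk_lucas -[_ *: F *m u]scalemxAl.
have transfer_d :
    (lucas_poly t.+1).[2%:R * lam] *: (F *m u) = (2%:R * gamma) *: (F *m v).
  by rewrite -lucas_u -!mulmxA transfer -!scalemxAr !mulmxA eigen_d_ds scalerA.
have transfer_dS :
    (lucas_poly t).[2%:R * lam] *: (F *m u) = (2%:R * gamma * lam) *: (F *m v).
  rewrite -lucas_u -eigen_d_S_walk -!mulmxA (mulmxA U) -walk_exprS transfer -!scalemxAr.
  by rewrite !mulmxA eigen_dSds -[lam *: F *m v]scalemxAl !scalerA.
have cancel :
    (lam * (lucas_poly t.+1).[2%:R * lam] - (lucas_poly t).[2%:R * lam]) *: (F *m u) = 0.
  by rewrite scalerBl -scalerA transfer_d transfer_dS scalerA mulrC subrr.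
have pst_val : (pst_poly t).[2%:R * lam] =
    4%:R * ((lam * (lucas_poly t.+1).[2%:R * lam] - (lucas_poly t).[2%:R * lam]) * lam).
  by rewrite /pst_poly lucas_polySS !(hornerM, hornerD, hornerN, hornerX); ring.
by rewrite pst_val -!scalerA [lam *: (E *m u)]scalemxAl cancel !scaler0.
Qed.
End WalkOnEigenspace.

Section GraphWalk.
Context {V : finType} {e : rel V}.
Hypothesis e_sym : symmetric e.

Definition arc_rev (a : Defs.arc e) : Defs.arc e :=
  exist _ (arc_inv_pair (val a)) (etrans (e_sym _ _) (valP a)).

Lemma arc_inv_pairK : involutive (@arc_inv_pair V).
Proof. by case. Qed.

Lemma shift_invol : shift e *m shift e = 1%:M.
Proof.
apply/matrixP => i j; rewrite !mxE.
rewrite (bigD1 (enum_rank (arc_rev (enum_val i)))) //= big1 ?addr0 => [|k ne_k].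
  rewrite !mxE enum_rankK /= arc_inv_pairK eqxx mul1r.
  by rewrite (inj_eq (can_inj arc_inv_pairK)) (inj_eq val_inj) (inj_eq enum_val_inj).
rewrite !mxE; case: eqP => [def_i | _]; last by rewrite mul0r.
case/eqP: ne_k; apply: enum_val_inj; apply: val_inj.
by rewrite enum_rankK /= def_i arc_inv_pairK.
Qed.

Lemma card_arcs_to v : #|[set a : Defs.arc e | term_arc a == v]| = deg e v.
Proof.
have tail_inj :
    {in [set a : Defs.arc e | term_arc a == v] &, injective (@tail_arc V e)}.
  move=> [[w1 v1] h1] [[w2 v2] h2].
  rewrite !inE /tail_arc /term_arc /= => /eqP v1E /eqP v2E w12.
  by apply: val_inj; rewrite /= w12 v1E v2E.
rewrite -(card_in_imset tail_inj); apply: eq_card => w; rewrite inE.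
apply/imsetP/idP => [[a ta ->] | e_vw].
  by rewrite inE in ta; rewrite -(eqP ta) e_sym; exact: valP a.
have e_wv : e (w, v).1 (w, v).2 by rewrite /= e_sym.
by exists (exist _ (w, v) e_wv); rewrite ?inE.
Qed.

Lemma sum_arcs_to v :
  \sum_(k < #|Defs.arc e|) ((v == term_arc (enum_val k))%:R : algC) = (deg e v)%:R.
Proof.
rewrite -(big_enum_val (A := xpredT)
                      (fun a : Defs.arc e => ((v == term_arc a)%:R : algC))) /=.
rewrite -card_arcs_to -sum1_card natr_sum big_mkcond [RHS]big_mkcond.
by apply: eq_bigr => a _; rewrite !inE /= eq_sym; case: eqP.
Qed.

Lemma deg_term_gt0 (a : Defs.arc e) : (0 < deg e (term_arc a))%N.
Proof. by rewrite -card_arcs_to; apply/card_gt0P; exists a; rewrite inE. Qed.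

Definition bdry_weight v : algC := (sqrtC (deg e v)%:R)^-1.

Lemma conj_bdry_weight v : (bdry_weight v)^* = bdry_weight v.
Proof. by apply: geC0_conj; rewrite invr_ge0 sqrtC_ge0 ler0n. Qed.

Lemma bdry_weight_deg v : bdry_weight v ^+ 2 * (deg e v)%:R = (0 < deg e v)%N%:R.
Proof.
have [->|deg_gt0] := posnP (deg e v); first by rewrite mulr0.
by rewrite exprVn sqrtCK mulVf // pnatr_eq0 -lt0n.
Qed.

Lemma adj_bdry : adjmx (bdry e) = (bdry e)^T.
Proof.
apply/matrixP => k x; rewrite !mxE.
by case: eqP => _; [exact: conj_bdry_weight | exact: conjC0].
Qed.

Lemma bdryE z k :
  bdry e z k = (enum_val z == term_arc (enum_val k))%:R * bdry_weight (enum_val z).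
Proof. by rewrite mxE; case: eqP; rewrite ?mul1r ?mul0r. Qed.

Lemma bdry_mul_adj z x :
  (bdry e *m adjmx (bdry e)) z x = ((z == x) && (0 < deg e (enum_val z))%N)%:R.
Proof.
rewrite adj_bdry mxE.
under eq_bigr => k _ do rewrite [(bdry e)^T _ _]mxE !bdryE mulrACA -natrM mulnb.
rewrite -big_distrl /=; case: eqVneq => [<- | neq_zx] /=.
  under eq_bigr do rewrite andbb.
  by rewrite sum_arcs_to -expr2 mulrC bdry_weight_deg.
rewrite big1 ?mul0r // => k _.
have [zk|] := eqVneq (enum_val z) (term_arc (enum_val k)); last by [].
have [xk|] := eqVneq (enum_val x) (term_arc (enum_val k)); last by rewrite andbF.
by case/eqP: neq_zx; apply: enum_val_inj; rewrite zk xk.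
Qed.

Lemma adj_bdry_idem : adjmx (bdry e) *m bdry e *m adjmx (bdry e) = adjmx (bdry e).
Proof.
apply/matrixP => k x; rewrite -mulmxA mxE (bigD1 x) //= big1 ?addr0 => [|z neq_zx].
  rewrite bdry_mul_adj eqxx /= adj_bdry [(bdry e)^T _ _]mxE bdryE.
  have [xk|_] := eqVneq (enum_val x) (term_arc (enum_val k)).
    by rewrite xk deg_term_gt0 mulr1.
  by rewrite !mul0r.
by rewrite bdry_mul_adj (negbTE neq_zx) mulr0.
Qed.
End GraphWalk.

Lemma spectral_eigenprojection {n} {P : 'M[algC]_n} {s E} {lam : algC} :
  spectral_decomp P s E -> lam \in s -> E lam *m P = lam *: E lam.
Proof.
move=> [uniq_s proj orth _ ->] lam_s; have [_ idem _] := proj lam lam_s.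
rewrite mulmx_sumr (bigD1_seq lam) //= big1_seq ?addr0 => [|mu /andP[neq_mu mu_s]].
  by rewrite -scalemxAr idem.
by rewrite -scalemxAr orth ?scaler0 // eq_sym.
Qed.

Theorem lemma9p1 (V : finType) (e : rel V) (x y : V) (tau : nat) :
  simple_graph e ->
  pst (evol e) (adjmx (bdry e) *m evec x) (adjmx (bdry e) *m evec y) tau ->
  forall (s : seq algC) (E : algC -> 'M[algC]_(#|V|)),
    spectral_decomp (discr e) s E ->
    forall lam, lam \in eig_support s E (evec x) -> 2%:R * lam \in Aint.
Proof.
move=> [e_sym _] [_ [tau_gt0 [gamma [_ transfer]]]] s E spec lam.
rewrite mem_filter => /andP[Ex_neq0 lam_s].
have E_eigen := spectral_eigenprojection spec lam_s.
case: tau tau_gt0 transfer => // t _ transfer.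
have := eigen_pst_root (shift_invol e_sym) (adj_bdry_idem e_sym) (erefl (evol e))
          E_eigen transfer.
move/eqP; rewrite scaler_eq0 (negbTE Ex_neq0) orbF => root_pst.
exact: root_monic_Aint root_pst (pst_poly_monic t) (pst_polyOver _ t).
Qed.
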